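(* Let $M$ be a finitely presented $n$-parameter persistence module with minimal free resolution $(F_\bullet,p_\bullet)$ and fixed decomposition isomorphisms as described in the context. If $\vec b\in\xi_0(M)$ (a generator of $F_0$), then $\vec b$ generates a non-empty bar in $M^{\mathcal L_{\vec b}}$.
   Context: Modules are $\mathbb{R}^n$-graded modules over $P_n$ (monoid ring over a field of $([0,\infty)^n,+)$); $\xi_0(M)$ denotes the generators (with their grades) of $F_0$ in a minimal free resolution. For $\vec a\in\mathbb{R}^n$, $\mathcal L_{\vec a}$ is the line $t\mapsto\vec a+t\vec1$. For a positively sloped line $\mathcal L$ with order-preserving $\|\cdot\|_\infty$-isometric parametrization $\iota$, $M^{\mathcal L}=M\circ\iota$, and $F^{\mathcal L}_\bullet$ is the induced free resolution of $M^{\mathcal L}$ (pullback along $\iota$): generator $\vec a$ of $F_i$ corresponds to $\vec a^{\mathcal L}$ of grade $\iota^{-1}(\mathrm{push}_{\mathcal L}(\mathrm{gr}\,\vec a))$, where $\mathrm{push}_{\mathcal L}(\vec p)=\min\{\vec q\in\mathcal L:\vec q\ge\vec p\}$. For each $\mathcal L$ fix an isomorphism $\phi:M^{\mathcal L}\to\bigoplus_{j\in\mathcal J}\mathds 1^{I_j}$, $I_j=[b_j,d_j)$ (possibly empty), with $|\mathcal J|$ equal to the number of generators of $F_0$. The canonical resolution $F'_\bullet$ of $\bigoplus\mathds 1^{I_j}$ has $F'_0$ free on $\{b_j\}$, $F'_1$ free on $\{d_j:d_j\neq\infty\}$, $d_j\mapsto x^{d_j-b_j}b_j$; $\phi$ lifts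 to a chain map $\phi_\bullet:F^{\mathcal L}_\bullet\to F'_\bullet$. A generator $\vec b$ of $F_0$ generates the bar $I_j$ in $M^{\mathcal L}$ if $\mathrm{gr}(\vec b^{\mathcal L})=b_j$ and the coefficient of $b_j$ in $\phi_0(\vec b^{\mathcal L})$ is nonzero; a generator $\vec r$ of $F_1$ kills $I_j$ if $\mathrm{gr}(\vec r^{\mathcal L})=d_j$ and the coefficient of $d_j$ in $\phi_1(\vec r^{\mathcal L})$ is nonzero. The isomorphisms are fixed so that each bar is generated by a unique generator of $F^{\mathcal L}_0$ and killed by a unique generator of $F^{\mathcal L}_1$, and every generator of $F^{\mathcal L}_0$ generates some (possibly empty) bar. *)

From HB Require Import structures.
From mathcomp Require Import all_boot all_order all_algebra.
From mathcomp Require Import reals.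
Set Implicit Arguments. Unset Strict Implicit. Unset Printing Implicit Defensive.
Import Order.TTheory GRing.Theory Num.Theory.
Local Open Scope ring_scope.

Section PersDefs.
Variable k : fieldType.
Variable R : realType.

Definition leRn (n : nat) (x y : 'I_n -> R) : Prop := forall i, x i <= y i.

(* iota_a(t) = a + t*1 : the order-preserving ||.||_oo-isometric
   parametrization of the line L_a (normalized so that iota_a(0) = a) *)
Definition lineL (n : nat) (a : 'I_n -> R) (t : R) : 'I_n -> R :=
  fun i => a i + t.

(* push_param a p t  <->  iota_a(t) = push_{L_a}(p) = min {q in L_a | q >= p},
   i.e. t = iota_a^{-1}(push_{L_a} p). *)
Definition push_param (n : nat) (a p : 'I_n -> R) (t : R) : Prop :=
  leRn p (lineL a t) /\ (forall s, leRn p (lineL a s) -> t <= s).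

(* ---------- n-parameter free presentations ----------
   A finitely generated free R^n-graded P_n-module with generators
   indexed by 'I_m of grades g : 'I_m -> R^n; a graded morphism
   F_1 -> F_0 is given by a scalar matrix P : 'M_(m1,m0) (row r is the
   image of the r-th generator of F_1, the monomial factors x^(g1 r - g0 i)
   being implicit), subject to the grading condition. *)

Definition graded_n (n m1 m0 : nat) (g1 : 'I_m1 -> 'I_n -> R)
  (g0 : 'I_m0 -> 'I_n -> R) (P : 'M[k]_(m1, m0)) : Prop :=
  forall r i, P r i != 0 -> leRn (g0 i) (g1 r).

(* F_0 is minimal: im p_1 is contained in m F_0 (no unit entries) *)
Definition min_F0 (n m1 m0 : nat) (g1 : 'I_m1 -> 'I_n -> R)
  (g0 : 'I_m0 -> 'I_n -> R) (P : 'M[k]_(m1, m0)) : Prop :=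
  forall r i, P r i != 0 -> g0 i <> g1 r.

(* F_1 is minimal: the images p_1(r) form a minimal (irredundant)
   generating set of ker(F_0 -> M) = im p_1: no p_1(r) lies in the
   submodule generated by the p_1(r'), r' <> r. *)
Definition min_F1 (n m1 m0 : nat) (g1 : 'I_m1 -> 'I_n -> R)
  (P : 'M[k]_(m1, m0)) : Prop :=
  forall r, ~ exists c : 'rV[k]_m1,
    [/\ c ord0 r = 0,
        (forall r', c ord0 r' != 0 -> leRn (g1 r') (g1 r)) &
        c *m P = row r P].

(* (g0, g1, P) is the beginning F_1 -> F_0 of a minimal free resolution
   of M := coker P *)
Definition min_presentation (n m1 m0 : nat) (g1 : 'I_m1 -> 'I_n -> R)
  (g0 : 'I_m0 -> 'I_n -> R) (P : 'M[k]_(m1, m0)) : Prop :=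
  [/\ graded_n g1 g0 P, min_F0 g1 g0 P & min_F1 g1 P].

(* ---------- 1-parameter free modules ----------
   grades in option R, where None means "no such generator" (used for the
   bars with d_j = oo, which contribute no generator to F'_1). *)

(* v in F(t): v is a combination of generators of grade <= t *)
Definition supportedO (m : nat) (gr : 'I_m -> option R) (t : R)
  (v : 'rV[k]_m) : Prop :=
  forall i, v ord0 i != 0 -> exists g, gr i = Some g /\ g <= t.

Definition gradedO (m m' : nat) (gs : 'I_m -> option R) (gt : 'I_m' -> option R)
  (A : 'M[k]_(m, m')) : Prop :=
  forall i j, A i j != 0 ->
    exists gi gj, [/\ gs i = Some gi, gt j = Some gj & gj <= gi].

(* Phi0 : F_0 -> F'_0 (part of a chain map between the presentations
   P : F_1 -> F_0 and P' : F'_1 -> F'_0) induces an isomorphism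
   coker P -> coker P', checked pointwise at every t in R. *)
Definition coker_iso (m0 m1 m0' m1' : nat)
  (g0 : 'I_m0 -> option R) (g1 : 'I_m1 -> option R) (P : 'M[k]_(m1, m0))
  (g0' : 'I_m0' -> option R) (g1' : 'I_m1' -> option R) (P' : 'M[k]_(m1', m0'))
  (Phi0 : 'M[k]_(m0, m0')) : Prop :=
  forall t : R,
  (forall w, supportedO g0' t w ->
     exists v u, [/\ supportedO g0 t v, supportedO g1' t u &
                     w = v *m Phi0 + u *m P']) /\
  (forall v, supportedO g0 t v ->
     (exists u, supportedO g1' t u /\ v *m Phi0 = u *m P') ->
     exists s, supportedO g1 t s /\ v = s *m P).

(* the bar [b, d) with d = None meaning d = oo *)
Definition bar_wf (b : R) (d : option R) : Prop :=
  match d with None => True | Some d' => b <= d' end.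
Definition bar_nonempty (b : R) (d : option R) : Prop :=
  match d with None => True | Some d' => b < d' end.

Definition generates (m0 : nat) (gL0 : 'I_m0 -> R) (bb : 'I_m0 -> R)
  (Phi0 : 'M[k]_(m0, m0)) (i j : 'I_m0) : Prop :=
  gL0 i = bb j /\ Phi0 i j != 0.

Definition kills (m1 m0 : nat) (gL1 : 'I_m1 -> R) (dd : 'I_m0 -> option R)
  (Phi1 : 'M[k]_(m1, m0)) (r : 'I_m1) (j : 'I_m0) : Prop :=
  dd j = Some (gL1 r) /\ Phi1 r j != 0.

End PersDefs.

From HB Require Import structures.
From mathcomp Require Import all_boot all_order all_algebra.
From mathcomp Require Import reals.
From Stdlib Require Import FunctionalExtensionality.
Set Implicit Arguments. Unset Strict Implicit. Unset Printing Implicit Defensive.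
Import Order.TTheory GRing.Theory Num.Theory.
Local Open Scope ring_scope.

(* If the bar generated by b were empty, the relation r killing it would be
   born on L_b at the same time as b.  Since phi is a chain map, some
   generator i occurring in p_1(r) also hits that bar, and by gradings i is
   born at that time too, so i = b by uniqueness of the generating
   generator.  But then gr b <= gr r <= push(gr b) = gr b, i.e. p_1(r) has a
   unit coefficient on b, contradicting minimality of F_0. *)

Section PushOntoLine.
Variables (R : realType) (n : nat).
Implicit Types (a p q : 'I_n -> R) (s t : R).

Lemma push_param_base a t : push_param a a t -> t <= 0.
Proof. by case=> _; apply=> i; rewrite /lineL addr0. Qed.

Lemma push_param_le a p q s t :
  leRn p q -> push_param a p s -> push_param a q t -> s <= t.
Proof.
by move=> le_pq [_ min_s] [q_le _]; apply: min_s => i; apply: le_trans (q_le i).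
Qed.

Lemma leRn_lineL_squeeze a p t :
  t <= 0 -> leRn a p -> leRn p (lineL a t) -> p = a.
Proof.
move=> t_le0 a_le_p p_le; apply: functional_extensionality => i.
apply: le_anti; rewrite a_le_p andbT.
by apply: le_trans (p_le i) _; rewrite /lineL gerDl.
Qed.

End PushOntoLine.

Lemma mulmx_neq0_support (K : fieldType) (m p q : nat)
    (A : 'M[K]_(m, p)) (B : 'M[K]_(p, q)) i j :
  (A *m B) i j != 0 -> exists l, A i l != 0 /\ B l j != 0.
Proof.
rewrite mxE => AB_neq0.
have /existsP[l /andP[Ail Blj]] : [exists l, (A i l != 0) && (B l j != 0)].
  apply: contraR AB_neq0; rewrite negb_exists => /forallP AB0.
  apply/eqP/big1 => l _.
  by have := AB0 l; rewrite negb_and !negbK => /orP[]/eqP->; rewrite ?mul0r ?mulr0.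
by exists l.
Qed.

Theorem mainTheorem15 (k : fieldType) (R : realType) (n m0 m1 : nat)
  (* minimal presentation F_1 -> F_0 of M = coker P1 *)
  (g0 : 'I_m0 -> 'I_n -> R) (g1 : 'I_m1 -> 'I_n -> R) (P1 : 'M[k]_(m1, m0))
  (* the generator b of F_0; we work on the line L = L_{gr b} *)
  (b : 'I_m0)
  (* grades of the generators of the induced resolution F^L *)
  (gL0 : 'I_m0 -> R) (gL1 : 'I_m1 -> R)
  (* the bars I_j = [bb j, dd j), j in J = 'I_m0 (None = oo) *)
  (bb : 'I_m0 -> R) (dd : 'I_m0 -> option R)
  (* the chain map phi_0, phi_1 : F^L -> F' *)
  (Phi0 : 'M[k]_(m0, m0)) (Phi1 : 'M[k]_(m1, m0)) :
  (0 < n)%N ->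
  min_presentation g1 g0 P1 ->
  (forall i, push_param (g0 b) (g0 i) (gL0 i)) ->
  (forall r, push_param (g0 b) (g1 r) (gL1 r)) ->
  (forall j, bar_wf (bb j) (dd j)) ->
  gradedO (fun i => Some (gL0 i)) (fun j => Some (bb j)) Phi0 ->
  gradedO (fun r => Some (gL1 r)) dd Phi1 ->
  P1 *m Phi0 = Phi1 *m 1%:M ->
  coker_iso (fun i => Some (gL0 i)) (fun r => Some (gL1 r)) P1
            (fun j => Some (bb j)) dd (1%:M : 'M[k]_m0) Phi0 ->
  (forall j, exists! i, generates gL0 bb Phi0 i j) ->
  (forall j, dd j <> None -> exists! r, kills gL1 dd Phi1 r j) ->
  (forall i, exists j, generates gL0 bb Phi0 i j) ->
  exists j, generates gL0 bb Phi0 b j /\ bar_nonempty (bb j) (dd j).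
Proof.
move=> _ [graded_P1 min_P1 _] push0 push1 wf_bars graded_Phi0 _ chain _
  gen_unique kill_exists gen_exists.
have [j gen_bj] := gen_exists b; exists j; split=> //.
case dd_j: (dd j) => [d|] //=.
have := wf_bars j; rewrite dd_j /= le_eqVlt => /orP[/eqP birth_eq_death|//].
have [|r [[] dd_r Phi1_rj _]] := kill_exists j; first by rewrite dd_j.
have gLr : gL1 r = bb j by move: dd_r; rewrite dd_j birth_eq_death => -[].
have [i [P1_ri Phi0_ij]] : exists i, P1 r i != 0 /\ Phi0 i j != 0.
  by apply: mulmx_neq0_support; rewrite chain mulmx1.
have gen_ij : generates gL0 bb Phi0 i j.
  split=> //; apply: le_anti; apply/andP; split.
  - by rewrite -gLr; apply: push_param_le (graded_P1 r i P1_ri) (push0 i) (push1 r).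
  - by have [_ [_ [[<-] [<-]]]] := graded_Phi0 i j Phi0_ij.
have [i0 [_ gen_eq]] := gen_unique j.
have i_eq_b : i = b by rewrite -(gen_eq i gen_ij) (gen_eq b gen_bj).
subst i.
have gLb_le0 : gL1 r <= 0.
  by rewrite gLr -(proj1 gen_ij); apply: push_param_base.
have g1r_on_line : leRn (g1 r) (lineL (g0 b) (gL1 r)) by case: (push1 r).
exfalso; apply: (min_P1 r b P1_ri); apply: esym.
exact: leRn_lineL_squeeze gLb_le0 (graded_P1 r b P1_ri) g1r_on_line.
Qed.
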